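(* Let $a\ge 2$ be even and let $c$ be an integer with $0<c<\frac a2$. Then $U=\{(a,-a),(c,-c),(0,0)\}\subseteq\mathcal{B}$ is unavoidable.
   Context: The bicyclic inverse semigroup is $\mathcal{B}=\{(a,b)\in\mathbb{Z}\times\mathbb{Z}\mid a\ge 0,\ a+b\ge 0\}$ with multiplication $(a,b)(c,d)=(\max\{c+d,a\}-d,\ b+d)$. A subset $U\subseteq\mathcal{B}$ is called avoidable if $\mathcal{B}$ can be partitioned into two subsets $A$ and $B$ such that no element of $U$ can be written as a product $xy$ of two distinct elements $x\neq y$ both in $A$, or both in $B$. A set is unavoidable if it is not avoidable. *)

From Stdlib Require Import ZArith.
Open Scope Z_scope.

(* The bicyclic inverse semigroup B = {(a,b) in Z x Z | a >= 0, a + b >= 0}. *)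
Definition inB (x : Z * Z) : Prop := 0 <= fst x /\ 0 <= fst x + snd x.

Definition bmul (x y : Z * Z) : Z * Z :=
  (Z.max (fst y + snd y) (fst x) - snd y, snd x + snd y).

(* A partition of B into two parts A, B is encoded by a colouring
   col : Z*Z -> bool (A = elements of B coloured true, B = coloured false;
   values outside B are irrelevant). *)
Definition avoidable (U : Z * Z -> Prop) : Prop :=
  exists col : Z * Z -> bool,
    forall x y : Z * Z, inB x -> inB y -> x <> y -> col x = col y ->
      ~ U (bmul x y).

Definition unavoidable (U : Z * Z -> Prop) : Prop := ~ avoidable U.

(* Put m = a/2 - c > 0 and write e_k = (k,-k) (the idempotents) and z_k = (0,k).
   Then e_m z_m = (0,0), e_(m+c) z_m = (c,-c), e_(m+c) z_(m+c) = (0,0),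
   e_(m+2c) z_(m+c) = (c,-c) and e_m e_(m+2c) = (a,-a), so the five elements
   e_m, z_m, e_(m+c), z_(m+c), e_(m+2c) form an odd cycle whose consecutive
   members must receive different colours in any avoiding partition. *)
From Stdlib Require Import ZArith Lia.
Open Scope Z_scope.

Lemma bmul_idem_idem (e f : Z) : 0 <= e -> bmul (e, - e) (f, - f) = (e + f, - (e + f)).
Proof. intro He; unfold bmul; cbn [fst snd]; f_equal; lia. Qed.

Lemma bmul_idem_zero_l (e n : Z) :
  n <= e -> bmul (e, - e) (0, n) = (e - n, - (e - n)).
Proof. intro Hne; unfold bmul; cbn [fst snd]; f_equal; lia. Qed.

Lemma inB_idem (k : Z) : 0 <= k -> inB (k, - k).
Proof. unfold inB; cbn [fst snd]; lia. Qed.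

Lemma inB_zero_l (k : Z) : 0 <= k -> inB (0, k).
Proof. unfold inB; cbn [fst snd]; lia. Qed.

Lemma idem_neq_zero_l (k n : Z) : 0 < k -> (k, - k) <> (0, n).
Proof. intros Hk Heq; injection Heq; lia. Qed.

Lemma bool_odd_cycle5 (b0 b1 b2 b3 b4 : bool) :
  b0 <> b1 -> b1 <> b2 -> b2 <> b3 -> b3 <> b4 -> b4 <> b0 -> False.
Proof. destruct b0, b1, b2, b3, b4; congruence. Qed.

Theorem proposition3p5 (a c : Z) :
  2 <= a -> Z.Even a -> 0 < c -> 2 * c < a ->
  unavoidable (fun u => u = (a, - a) \/ u = (c, - c) \/ u = (0, 0)).
Proof.
  intros Ha [h ->] Hc Hac [col Hcol].
  set (m := h - c).
  assert (Hm : 0 < m) by (unfold m; lia).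
  assert (Hapart : forall k n, 0 <= n <= k -> 0 < k ->
            (k - n = 0 \/ k - n = c) -> col (k, - k) <> col (0, n)).
  { intros k n Hnk Hk Hkn Heq.
    refine (Hcol _ _ (inB_idem k _) (inB_zero_l n _) (idem_neq_zero_l k n _) Heq _); try lia.
    rewrite bmul_idem_zero_l by lia.
    destruct Hkn as [-> | ->]; auto. }
  apply (bool_odd_cycle5 (col (m, - m)) (col (0, m)) (col (m + c, - (m + c)))
           (col (0, m + c)) (col (m + 2 * c, - (m + 2 * c)))).
  - apply Hapart; lia.
  - intro Heq; apply (Hapart (m + c) m); [lia | lia | lia | auto].
  - apply Hapart; lia.
  - intro Heq; apply (Hapart (m + 2 * c) (m + c)); [lia | lia | lia | auto].
  - intro Heq; symmetry in Heq.
    refine (Hcol (m, - m) (m + 2 * c, - (m + 2 * c)) (inB_idem m _) (inB_idem _ _) _ Heq _);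
      try lia.
    + intro Heq'; apply (f_equal fst) in Heq'; cbn [fst] in Heq'; lia.
    + left; rewrite bmul_idem_idem by lia; f_equal; unfold m; lia.
Qed.
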